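(* Let $\mathsf{K}$ be a quasivariety, $\mathbf{B}\in\mathsf{K}$, and $\mathbf{A}\leq\mathbf{B}$ full in $\mathsf{K}$. If $\theta,\phi\in\mathrm{Con}_{\mathsf{K}}(\mathbf{B})$ satisfy $\theta\neq\phi$ and $\theta{\upharpoonright}_A=\phi{\upharpoonright}_A$, then $\theta\cap\phi=\mathrm{id}_B$.
   Context: A quasivariety is a class of similar algebras closed under isomorphic copies, subalgebras, direct products and ultraproducts. $\mathrm{Con}_{\mathsf{K}}(\mathbf{B})$ is the set of congruences $\theta$ of $\mathbf{B}$ with $\mathbf{B}/\theta\in\mathsf{K}$; $\theta{\upharpoonright}_A=\theta\cap(A\times A)$. $\mathbf{A}\leq\mathbf{B}$ is full in $\mathsf{K}$ if it is proper, almost total ($B=\mathrm{Sg}^{\mathbf{B}}(A\cup\{b\})$ for some $b\in B$), and for every $\theta\in\mathrm{Con}_{\mathsf{K}}(\mathbf{B})$ with $\theta\neq\mathrm{id}_B$ and every $b\in B$ there is $a\in A$ with $\langle a,b\rangle\in\theta$. *)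

From mathcomp Require Import all_boot.
From Stdlib Require Import ClassicalEpsilon.
Set Implicit Arguments.
Unset Strict Implicit.
Unset Printing Implicit Defensive.

Record signature := Signature { sym : Type; arity : sym -> nat }.

Record algebra (sg : signature) := Algebra {
  carrier :> Type;
  op : forall f : sym sg, ('I_(arity f) -> carrier) -> carrier }.
Arguments op {sg} _ _ _.

Section UA.
Variable sg : signature.

Definition is_hom (A B : algebra sg) (h : A -> B) : Prop :=
  forall f (args : 'I_(arity f) -> A), h (op A f args) = op B f (fun k => h (args k)).

Definition isomorphic (A B : algebra sg) : Prop :=
  exists h : A -> B, is_hom h /\ (forall x y, h x = h y -> x = y) /\ (forall y, exists x, h x = y).

Definition subuniverse (A : algebra sg) (S : A -> Prop) : Prop :=
  forall f (args : 'I_(arity f) -> A), (forall k, S (args k)) -> S (op A f args).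

Definition subalg (A : algebra sg) (S : A -> Prop) (HS : subuniverse S) : algebra sg :=
  @Algebra sg {x : A | S x}
    (fun f args => exist _ (op A f (fun k => proj1_sig (args k)))
                          (HS f _ (fun k => proj2_sig (args k)))).

Definition Sg (A : algebra sg) (X : A -> Prop) : A -> Prop :=
  fun a => forall S : A -> Prop, subuniverse S -> (forall x, X x -> S x) -> S a.

Definition prod_alg (I : Type) (A : I -> algebra sg) : algebra sg :=
  @Algebra sg (forall i, A i) (fun f args => fun i => op (A i) f (fun k => args k i)).

Definition congruence (A : algebra sg) (R : A -> A -> Prop) : Prop :=
  (forall x, R x x) /\ (forall x y, R x y -> R y x) /\
  (forall x y z, R x y -> R y z -> R x z) /\
  (forall f (a b : 'I_(arity f) -> A), (forall k, R (a k) (b k)) ->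
      R (op A f a) (op A f b)).

Definition qcarrier (A : algebra sg) (R : A -> A -> Prop) : Type :=
  {X : A -> Prop | exists a, X = R a}.
Definition qclass (A : algebra sg) (R : A -> A -> Prop) (a : A) : qcarrier R :=
  exist _ (R a) (ex_intro _ a erefl).
Definition qrep (A : algebra sg) (R : A -> A -> Prop) (X : qcarrier R) : A :=
  proj1_sig (constructive_indefinite_description _ (proj2_sig X)).
Definition quot (A : algebra sg) (R : A -> A -> Prop) : algebra sg :=
  @Algebra sg (qcarrier R) (fun f args => qclass R (op A f (fun k => qrep (args k)))).

Definition ultrafilter (I : Type) (U : (I -> Prop) -> Prop) : Prop :=
  U (fun _ => True) /\ ~ U (fun _ => False) /\
  (forall X Y : I -> Prop, U X -> (forall i, X i -> Y i) -> U Y) /\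
  (forall X Y : I -> Prop, U X -> U Y -> U (fun i => X i /\ Y i)) /\
  (forall X : I -> Prop, U X \/ U (fun i => ~ X i)).

Definition ultraproduct (I : Type) (U : (I -> Prop) -> Prop) (A : I -> algebra sg) :
  algebra sg :=
  quot (fun x y : prod_alg A => U (fun i => x i = y i)).

Definition quasivariety (K : algebra sg -> Prop) : Prop :=
  (forall A B : algebra sg, K A -> isomorphic B A -> K B) /\
  (forall (A : algebra sg) (S : A -> Prop) (HS : subuniverse S), K A -> (exists x, S x) -> K (subalg HS)) /\
  (forall (I : Type) (A : I -> algebra sg), (forall i, K (A i)) -> K (prod_alg A)) /\
  (forall (I : Type) (U : (I -> Prop) -> Prop) (A : I -> algebra sg),
      ultrafilter U -> (forall i, K (A i)) -> K (ultraproduct U A)).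

Definition ConK (K : algebra sg -> Prop) (B : algebra sg) (R : B -> B -> Prop) : Prop :=
  congruence R /\ K (quot R).

Definition full_in (K : algebra sg -> Prop) (B : algebra sg) (A : B -> Prop) : Prop :=
  (exists b, ~ A b) /\
  (exists b, forall c, Sg (fun x => A x \/ x = b) c) /\
  (forall theta : B -> B -> Prop, ConK K theta ->
     ~ (forall x y, theta x y <-> x = y) ->
     forall b, exists a, A a /\ theta a b).

End UA.

From mathcomp Require Import all_boot.
From Stdlib Require Import FunctionalExtensionality PropExtensionality ProofIrrelevance Classical ClassicalEpsilon.

Set Implicit Arguments.
Unset Strict Implicit.

(* Since [K] is closed under subdirect products, [theta /\ phi] is again in
   [Con_K(B)].  If it were not the identity, fullness would make every block of
   [theta /\ phi] meet [A]; then any [theta]-related [x, y] are joined through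
   their representatives in [A], where [theta] and [phi] agree, so [theta]
   would coincide with [phi]. *)

Section Quotients.
Variables (sg : signature) (B : algebra sg) (R : B -> B -> Prop).
Hypothesis congR : congruence R.

Lemma qclass_eqE (a b : B) : qclass R a = qclass R b <-> R a b.
Proof.
have [Rr [Rs [Rt _]]] := congR; split => [E | Rab].
  by have := f_equal (@proj1_sig _ _) E => /= ->; apply: Rr.
have E : R a = R b.
  apply: functional_extensionality => z; apply: propositional_extensionality.
  by split => H; [apply: Rt (Rs _ _ Rab) H | apply: Rt Rab H].
by apply: eq_sig_hprop => [*|]; [apply: proof_irrelevance | apply: E].
Qed.

Lemma qclass_qrep (X : quot R) : qclass R (qrep X) = X.
Proof.
rewrite /qrep; case: (constructive_indefinite_description _ _) => c /= Hc.
case: X Hc => P pf /= Hc; subst P.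
by rewrite /qclass (proof_irrelevance _ pf (ex_intro _ c erefl)).
Qed.

Lemma qrep_qclass (a : B) : R (qrep (qclass R a)) a.
Proof. by apply/qclass_eqE; rewrite qclass_qrep. Qed.

Lemma qclass_hom : is_hom (B := quot R) (qclass R).
Proof.
move=> f args; apply/qclass_eqE; have [_ [_ [_ Rc]]] := congR.
by apply: Rc => k; apply/qclass_eqE; rewrite qclass_qrep.
Qed.

End Quotients.

Lemma congruenceI (sg : signature) (B : algebra sg) (R S : B -> B -> Prop) :
  congruence R -> congruence S -> congruence (fun x y => R x y /\ S x y).
Proof.
move=> [Rr [Rs [Rt Rc]]] [Sr [Ss [St Sc]]]; split; [|split; [|split]].
- by move=> x; split.
- by move=> x y [h1 h2]; split; auto.
- by move=> x y z [h1 h2] [h3 h4]; split; eauto.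
- by move=> f a b H; split; [apply: Rc | apply: Sc] => k; case: (H k).
Qed.

Section Homomorphisms.
Variables (sg : signature) (B C : algebra sg) (h : B -> C).
Hypothesis hom_h : is_hom h.

Definition hom_image (c : C) : Prop := exists b, h b = c.

Lemma hom_image_subuniverse : subuniverse hom_image.
Proof.
move=> f args Hargs.
exists (op B f (fun k => proj1_sig (constructive_indefinite_description _ (Hargs k)))).
rewrite hom_h; congr (op C f _); apply: functional_extensionality => k.
by case: (constructive_indefinite_description _ _).
Qed.

Variable R : B -> B -> Prop.
Hypothesis congR : congruence R.
Hypothesis kerR : forall x y, h x = h y <-> R x y.

Lemma quot_ker_isomorphic : isomorphic (quot R) (subalg hom_image_subuniverse).
Proof.
have sig_eq (u v : subalg hom_image_subuniverse) : proj1_sig u = proj1_sig v -> u = v.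
  by apply: eq_sig_hprop => *; apply: proof_irrelevance.
exists (fun X => exist hom_image (h (qrep X)) (ex_intro _ _ erefl)); split; [|split].
- move=> f args; apply: sig_eq => /=; rewrite -hom_h.
  by apply/kerR; apply: qrep_qclass.
- move=> X Y /(f_equal (@proj1_sig _ _)) /= /kerR /(qclass_eqE congR).
  by rewrite !qclass_qrep.
- move=> [c [b hb]]; exists (qclass R b); apply: sig_eq => /=; rewrite -hb.
  by apply/kerR; apply: qrep_qclass.
Qed.

End Homomorphisms.

Lemma ConK_of_hom (sg : signature) (K : algebra sg -> Prop) (B C : algebra sg)
    (h : B -> C) (R : B -> B -> Prop) :
  quasivariety K -> K C -> inhabited B -> is_hom h ->
  congruence R -> (forall x y, h x = h y <-> R x y) -> ConK K R.
Proof.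
move=> [Kiso [Ksub _]] KC [b0] hom_h congR kerR; split => //.
apply: Kiso (quot_ker_isomorphic hom_h congR kerR).
by apply: Ksub => //; exists (h b0), b0.
Qed.

Lemma ConKI (sg : signature) (K : algebra sg -> Prop) (B : algebra sg)
    (theta phi : B -> B -> Prop) :
  quasivariety K -> inhabited B -> ConK K theta -> ConK K phi ->
  ConK K (fun x y => theta x y /\ phi x y).
Proof.
move=> QK inhB [Ct Kt] [Cp Kp].
pose Q (i : bool) := if i then quot theta else quot phi.
pose g (b : B) : prod_alg Q := fun i =>
  match i return Q i with true => qclass theta b | false => qclass phi b end.
apply: (@ConK_of_hom _ _ _ (prod_alg Q) g) => //.
- by have [_ [_ [Kprod _]]] := QK; apply: Kprod => -[].
- move=> f args; apply: functional_extensionality_dep => -[];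
  [exact: qclass_hom Ct f args | exact: qclass_hom Cp f args].
- exact: congruenceI.
- move=> x y; split => [E | [Txy Pxy]].
    by split; apply/qclass_eqE => //; [move/(f_equal (fun p => p true)): E
                                       | move/(f_equal (fun p => p false)): E].
  by apply: functional_extensionality_dep => -[]; apply/qclass_eqE.
Qed.

Lemma congr_sub_of_meet_transversal (sg : signature) (B : algebra sg)
    (A : B -> Prop) (R S : B -> B -> Prop) :
  congruence R -> congruence S ->
  (forall a a', A a -> A a' -> R a a' -> S a a') ->
  (forall b, exists a, A a /\ R a b /\ S a b) ->
  forall x y, R x y -> S x y.
Proof.
move=> [_ [Rs [Rt _]]] [_ [Ss [St _]]] agree cover x y Rxy.
have [a [Aa [Rax Sax]]] := cover x; have [a' [Aa' [Ray Say]]] := cover y.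
apply: St (Ss _ _ Sax) (St _ _ _ _ Say); apply: agree => //.
exact: Rt Rax (Rt _ _ _ Rxy (Rs _ _ Ray)).
Qed.

Lemma congr_eq_of_meet_transversal (sg : signature) (B : algebra sg)
    (A : B -> Prop) (theta phi : B -> B -> Prop) :
  congruence theta -> congruence phi ->
  (forall a a', A a -> A a' -> (theta a a' <-> phi a a')) ->
  (forall b, exists a, A a /\ theta a b /\ phi a b) ->
  forall x y, theta x y <-> phi x y.
Proof.
move=> Ct Cp agree cover x y; split; apply: congr_sub_of_meet_transversal => //.
- by move=> a a' Aa Aa'; case: (agree a a' Aa Aa').
- by move=> a a' Aa Aa'; case: (agree a a' Aa Aa').
- by move=> b; have [a [Aa [? ?]]] := cover b; exists a.
Qed.

Theorem mainTheorem5 (sg : signature) (K : algebra sg -> Prop) (B : algebra sg)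
  (A : B -> Prop) :
  quasivariety K -> K B ->
  subuniverse A -> (exists a, A a) ->
  full_in K A ->
  forall theta phi : B -> B -> Prop,
    ConK K theta -> ConK K phi ->
    ~ (forall x y, theta x y <-> phi x y) ->
    (forall a a', A a -> A a' -> (theta a a' <-> phi a a')) ->
    forall x y, theta x y /\ phi x y <-> x = y.
Proof.
move=> QK _ _ [a0 _] [_ [_ full]] theta phi Kt Kp neq agree.
have Kmeet := ConKI QK (inhabits a0) Kt Kp.
apply: NNPP => meet_not_id; apply: neq.
have [[Ct _] [Cp _]] := (Kt, Kp).
apply: congr_eq_of_meet_transversal agree _ => //.
by apply: full Kmeet _ => meet_id; apply: meet_not_id; apply: meet_id.
Qed.
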